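(* Let $a\ge b\ge1$ be integers with $a>\frac{1+\sqrt5}{2}b$, let $\beta>1$ be the positive root of $\beta^2=a\beta+b$ and $\beta'=a-\beta$. Then \[ \sup_{j\in\mathbb Z}P_{\mathbf h(j-\beta)}(\beta')\;\le\;\frac{b-1}{1-(\beta')^2}\;<\;2\beta-a-1 . \]
   Context: For an algebraic integer $\beta$, the $\beta$-adic expansion of $x\in\mathbb Z[\beta]$ is the unique infinite word $\mathbf h(x)=u_0u_1u_2\cdots$ with $u_n\in\{0,1,\dots,|N(\beta)|-1\}$ such that $x-\sum_{i=0}^{n-1}u_i\beta^i\in\beta^n\mathbb Z[\beta]$ for all $n\in\mathbb N$; here $|N(\beta)|=b$. For an infinite word $\mathbf u=u_0u_1\cdots$ of integers, $P_{\mathbf u}(X)=\sum_{n\ge0}u_nX^n$. Note $j-\beta\in\mathbb Z[\beta]$ for $j\in\mathbb Z$. *)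

From Stdlib Require Import Reals ZArith.
Open Scope R_scope.

(* Z[beta] as a subset of R: { m + n*beta : m, n integers }.
   (For beta a root of X^2 - a X - b this is the ring Z[beta].) *)
Definition inZbeta (beta y : R) : Prop :=
  exists m n : Z, y = IZR m + IZR n * beta.

Fixpoint psum (u : nat -> Z) (x : R) (n : nat) : R :=
  match n with
  | O => 0
  | S k => psum u x k + IZR (u k) * x ^ k
  end.

(* u is the beta-adic expansion h(x) of x in Z[beta], with digit bound b = |N(beta)|:
   u_n in {0,...,b-1} and x - sum_{i<n} u_i beta^i in beta^n Z[beta] for all n. *)
Definition is_beta_expansion (beta : R) (b : Z) (x : R) (u : nat -> Z) : Prop :=
  (forall n, (0 <= u n <= b - 1)%Z) /\
  (forall n, exists y, inZbeta beta y /\ x - psum u beta n = beta ^ n * y).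

Definition P_value (u : nat -> Z) (x s : R) : Prop :=
  infinite_sum (fun n => IZR (u n) * x ^ n) s.

(* The conjugate [x = a - beta] satisfies [beta x = -b], so it is negative, and the golden-ratio
   hypothesis gives [x^2 - x < 1], in particular [-1 < x].  For digits in [0, c] only the even
   powers of [x] contribute positively, so [P(x) <= c (1 + x^2 + x^4 + ...) = c / (1 - x^2)]; this
   uses only the digit bound [c = b - 1] of the expansion.  The strict inequality follows by
   clearing the denominator and substituting [b = - beta x]. *)
From Stdlib Require Import Reals ZArith Lra Psatz.
From Coquelicot Require Import Coquelicot.
Open Scope R_scope.

Lemma is_series_le (a b : nat -> R) (la lb : R) :
  (forall n, a n <= b n) -> is_series a la -> is_series b lb -> la <= lb.
Proof.
  intros Hab Ha Hb.
  apply (is_lim_seq_le (sum_n a) (sum_n b) la lb); [|exact Ha|exact Hb].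
  intro n. apply sum_n_m_le. exact Hab.
Qed.

(* [(|x|^n + x^n) / 2] is [x^n] for even [n] and [0] for odd [n] when [x <= 0]. *)
Lemma is_series_even_powers (x : R) :
  -1 < x <= 0 -> is_series (fun n => (Rabs x ^ n + x ^ n) / 2) (/ (1 - x ^ 2)).
Proof.
  intros Hx.
  assert (Habs : Rabs (Rabs x) < 1) by (rewrite Rabs_Rabsolu, Rabs_left1; lra).
  assert (Hx1 : Rabs x < 1) by (rewrite Rabs_left1; lra).
  pose proof (is_series_scal_l (/ 2)
    _ _ (is_series_plus _ _ _ _ (is_series_geom _ Habs) (is_series_geom _ Hx1))) as H.
  replace (/ (1 - x ^ 2)) with (scal (/ 2) (plus (/ (1 - Rabs x)) (/ (1 - x)))).
  - apply (is_series_ext _ _ _ (fun n => Rmult_comm _ _) H).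
  - rewrite Rabs_left1 by lra. change (/ 2 * (/ (1 - - x) + / (1 - x)) = / (1 - x ^ 2)).
    field. repeat split; nra.
Qed.

Lemma digit_term_le_even_part (d c x : R) (n : nat) :
  0 <= d <= c -> d * x ^ n <= c * ((Rabs x ^ n + x ^ n) / 2).
Proof.
  intros Hd.
  assert (Hpow : x ^ n <= Rabs x ^ n) by (rewrite RPow_abs; apply Rle_abs).
  assert (Hpos : 0 <= Rabs x ^ n + x ^ n).
  { rewrite RPow_abs. pose proof (Rabs_maj2 (x ^ n)). lra. }
  nra.
Qed.

Lemma is_series_digits_le (d : nat -> R) (c x : R) :
  (forall n, 0 <= d n <= c) -> -1 < x <= 0 ->
  exists s, is_series (fun n => d n * x ^ n) s /\ s <= c / (1 - x ^ 2).
Proof.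
  intros Hd Hx.
  assert (Hconv : ex_series (fun n => d n * x ^ n)).
  { apply (@ex_series_le R_AbsRing R_CompleteNormedModule _ (fun n => c * Rabs x ^ n)).
    - intro n. change (Rabs (d n * x ^ n) <= c * Rabs x ^ n).
      specialize (Hd n).
      rewrite Rabs_mult, <- RPow_abs, Rabs_right by lra.
      apply Rmult_le_compat_r; [apply pow_le, Rabs_pos | lra].
    - apply (@ex_series_scal_l R_AbsRing R_NormedModule c (fun n => Rabs x ^ n)), ex_series_geom.
      rewrite Rabs_Rabsolu, Rabs_left1; lra. }
  exists (Series (fun n => d n * x ^ n)). split; [exact (Series_correct _ Hconv)|].
  apply (is_series_le (fun n => d n * x ^ n) (fun n => c * ((Rabs x ^ n + x ^ n) / 2))).
  - intro n. apply digit_term_le_even_part, Hd.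
  - exact (Series_correct _ Hconv).
  - exact (is_series_scal_l c _ _ (is_series_even_powers x Hx)).
Qed.

Section QuadraticBeta.

Variables (a b beta : R).
Hypotheses (Hb : 1 <= b) (Hgolden : a > (1 + sqrt 5) / 2 * b)
           (Hbeta : beta > 1) (Hroot : beta ^ 2 = a * beta + b).

Lemma beta_mul_conj : beta * (a - beta) = - b.
Proof. nra. Qed.

(* With [t = beta - a > 0] and [t (a + t) = b], the bound [t^2 + t < 1] is [t < 1 / phi]. *)
Lemma conj_sq_sub_lt_one : (a - beta) ^ 2 - (a - beta) < 1.
Proof.
  pose proof beta_mul_conj as Hbx.
  assert (H5 : sqrt 5 * sqrt 5 = 5) by (apply sqrt_sqrt; lra).
  assert (H5p : 0 < sqrt 5) by (apply sqrt_lt_R0; lra).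
  assert (Ht : 0 < beta - a) by nra.
  replace ((a - beta) ^ 2 - (a - beta)) with ((beta - a) ^ 2 + (beta - a)) by ring.
  set (t := beta - a) in *.
  assert (Hb' : t * (a + t) = b) by (unfold t in *; nra).
  apply Rnot_le_lt. intro Hge.
  assert (Hsqrt : sqrt 5 <= 2 * t + 1) by nra.
  assert (Hphi : 1 <= (1 + sqrt 5) / 2 * t) by nra.
  nra.
Qed.

Lemma conj_in_unit_neg : -1 < a - beta <= 0.
Proof. pose proof conj_sq_sub_lt_one. pose proof beta_mul_conj. split; nra. Qed.

Lemma even_sum_bound_lt : (b - 1) / (1 - (a - beta) ^ 2) < 2 * beta - a - 1.
Proof.
  pose proof conj_sq_sub_lt_one as Hgap. pose proof conj_in_unit_neg as Hx.
  assert (Hbx : b = - (beta * (a - beta))) by (rewrite beta_mul_conj; ring).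
  assert (Ha : 0 < a) by (pose proof (sqrt_pos 5); nra).
  set (x := a - beta) in *.
  assert (Hq : 0 < 1 - x ^ 2) by nra.
  apply (Rmult_lt_reg_r (1 - x ^ 2)); [exact Hq|].
  unfold Rdiv. rewrite Rmult_assoc, Rinv_l, Rmult_1_r by lra.
  assert (Hdiff : (2 * beta - a - 1) * (1 - x ^ 2) - (b - 1)
                  = a * (1 + x - x ^ 2) - 2 * x * (1 - x ^ 2)).
  { rewrite Hbx. unfold x. ring. }
  nra.
Qed.

End QuadraticBeta.

Theorem mainTheorem4 (a b : Z) (beta : R) :
  (1 <= b)%Z -> (b <= a)%Z ->
  IZR a > (1 + sqrt 5) / 2 * IZR b ->
  beta > 1 -> beta ^ 2 = IZR a * beta + IZR b ->
  (forall (j : Z) (u : nat -> Z),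
     is_beta_expansion beta b (IZR j - beta) u ->
     exists s, P_value u (IZR a - beta) s /\
               s <= (IZR b - 1) / (1 - (IZR a - beta) ^ 2)) /\
  (IZR b - 1) / (1 - (IZR a - beta) ^ 2) < 2 * beta - IZR a - 1.
Proof.
  intros Hb _ Hgolden Hbeta Hroot.
  apply IZR_le in Hb.
  split; [|exact (even_sum_bound_lt _ _ _ Hb Hgolden Hbeta Hroot)].
  intros j u [Hdigits _].
  assert (Hu : forall n, 0 <= IZR (u n) <= IZR b - 1).
  { intro n. destruct (Hdigits n) as [H0 H1].
    split; [apply IZR_le, H0|]. rewrite <- minus_IZR. apply IZR_le, H1. }
  destruct (is_series_digits_le (fun n => IZR (u n)) _ _ Hu
              (conj_in_unit_neg _ _ _ Hb Hgolden Hbeta Hroot)) as [s [Hs Hle]].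
  exists s. split; [apply is_series_Reals, Hs | exact Hle].
Qed.
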